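(* Let $p\ge1$, $f\in\mathcal A_0$, and let $\gamma_f$ be a solution of Problem $S_p$ for $f$. Then $\overline\delta J_p(f,\gamma_f)=1$.
   Context: For a convex $u$, $u^*(y)=\sup_x\{\langle x,y\rangle-u(x)\}$. $\mathcal L$: proper convex $u:\mathbb R^n\to\mathbb R\cup\{+\infty\}$ with $u(x)\to+\infty$ as $|x|\to\infty$; $\mathcal L_0=\{u\in\mathcal L:u\ge0,\ u^{**}=u,\ u(0)=0\}$; $\mathcal A_0=\{e^{-u}:u\in\mathcal L_0\}$ (integrable, support with nonempty interior). For $f=e^{-u}$: $h_f=u^*$; $J(f)=\int f\,dx$; $J(f^\diamond)=\int(nf+f\log f)\,dx$; $\mu_p(f,\cdot)$ defined by $\int g\,d\mu_p(f,\cdot)=\int_{\mathrm{dom}(u)}g(\nabla u(x))h_f(\nabla u(x))^{1-p}f(x)\,dx$; $\delta J_p(f,g)=\frac1p\int h_g^p\,d\mu_p(f,\cdot)$ and $\overline\delta J_p(f,g)=(p\,\delta J_p(f,g)/J(f^\diamond))^{1/p}$. Gaussians: $\gamma_\phi(x)=e^{-\|\phi x\|^2/2}$, $\phi\in GL(n)$; $c_n=(2\pi)^{n/2}$. Problem $S_p$: find a Gaussian $\gamma_\phi$ maximizing $J(\gamma_\phi)/c_n$ subject to $\overline\delta J_p(f,\gamma_\phi)\le1$. *)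

From HB Require Import structures.
From mathcomp Require Import all_boot all_order all_algebra.
From mathcomp Require Import all_classical all_reals all_analysis.
Set Implicit Arguments. Unset Strict Implicit. Unset Printing Implicit Defensive.
Import Order.TTheory GRing.Theory Num.Theory.
Import numFieldNormedType.Exports.
Local Open Scope classical_set_scope.
Local Open Scope ring_scope.

Section Defs.
Variable R : realType.

Definition inner (n : nat) (x y : 'rV[R]_n) : R := \sum_(i < n) x 0 i * y 0 i.
Definition enorm (n : nat) (x : 'rV[R]_n) : R := Num.sqrt (inner x x).

(* Lebesgue integral on R^n of a nonnegative extended-real function,
   computed as an iterated one-dimensional Lebesgue integral (Tonelli). *)
Fixpoint lint (n : nat) : ('rV[R]_n -> \bar R) -> \bar R :=
  match n with
  | 0 => fun F => F 0
  | m.+1 => fun F => (\int[@lebesgue_measure R]_(t in [set: R])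
        lint (fun y : 'rV[R]_m => F (row_mx (const_mx t : 'rV[R]_1) y)))%E
  end.

Definition rint (n : nat) (F : 'rV[R]_n -> R) : \bar R :=
  (lint (fun x => (Num.max (F x) 0)%:E) - lint (fun x => (Num.max (- F x) 0)%:E))%E.

Definition dom (n : nat) (u : 'rV[R]_n -> \bar R) : set 'rV[R]_n :=
  [set x | u x \is a fin_num].

(* Convexity in R ∪ {+oo} (values -oo are excluded by properness). *)
Definition econvex (n : nat) (u : 'rV[R]_n -> \bar R) : Prop :=
  forall (x y : 'rV[R]_n) (t : R), 0 <= t <= 1 ->
    (u (t *: x + (1 - t) *: y)%R <= t%:E * u x + (1 - t)%R%:E * u y)%E.

Definition proper (n : nat) (u : 'rV[R]_n -> \bar R) : Prop :=
  (forall x, u x != -oo%E) /\ exists x, u x \is a fin_num.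

Definition coercive (n : nat) (u : 'rV[R]_n -> \bar R) : Prop :=
  forall M : R, exists r : R, forall x, r < enorm x -> (M%:E < u x)%E.

Definition classL (n : nat) (u : 'rV[R]_n -> \bar R) : Prop :=
  proper u /\ econvex u /\ coercive u.

Definition legendre (n : nat) (u : 'rV[R]_n -> \bar R) : 'rV[R]_n -> \bar R :=
  fun y => ereal_sup [set ((inner x y)%:E - u x)%E | x in [set: 'rV[R]_n]].

Definition classL0 (n : nat) (u : 'rV[R]_n -> \bar R) : Prop :=
  classL u /\ (forall x, (0 <= u x)%E) /\ legendre (legendre u) = u /\ u 0 = 0%E.

Definition expm (n : nat) (u : 'rV[R]_n -> \bar R) : 'rV[R]_n -> R :=
  fun x => match u x with
           | r%:E => expR (- r)
           | +oo%E => 0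
           | -oo%E => 0 (* never happens for proper u *)
           end.

Definition Jf (n : nat) (f : 'rV[R]_n -> R) : \bar R := rint f.

(* J(f^diamond) = int (n f + f log f) dx *)
Definition Jdiamond (n : nat) (f : 'rV[R]_n -> R) : \bar R :=
  rint (fun x => n%:R * f x + f x * ln (f x)).

Definition classA0 (n : nat) (u : 'rV[R]_n -> \bar R) : Prop :=
  classL0 u /\ Jf (expm u) \is a fin_num /\
  (interior [set x | expm u x != 0] !=set0).

Definition graddom (n : nat) (u : 'rV[R]_n -> \bar R) : set 'rV[R]_n :=
  [set x | interior (dom u) x /\ differentiable (fun z => fine (u z)) x].
Definition grad (n : nat) (u : 'rV[R]_n -> \bar R) (x : 'rV[R]_n) : 'rV[R]_n :=
  \row_(i < n) ('d (fun z => fine (u z)) x : 'rV[R]_n -> R) (delta_mx 0 i).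

Definition epow (a : \bar R) (s : R) : \bar R :=
  match a with
  | a'%:E => if a' == 0 then (if s < 0 then +oo%E else if s == 0 then 1%E else 0%E)
             else (powR a' s)%:E
  | +oo%E => if s < 0 then 0%E else if s == 0 then 1%E else +oo%E
  | -oo%E => 0%E
  end.

(* delta J_p(f,g) = 1/p int h_g^p d mu_p(f,.), where f = e^{-u}, h_f = u^*,
   h_g = hg and
   int G d mu_p(f,.) = int_{dom u} G(grad u x) h_f(grad u x)^{1-p} f(x) dx. *)
Definition deltaJ (n : nat) (p : R) (u : 'rV[R]_n -> \bar R)
    (hg : 'rV[R]_n -> \bar R) : \bar R :=
  ((p^-1)%:E * lint (fun x =>
     if `[< graddom u x >] then
       epow (hg (grad u x)) p * epow (legendre u (grad u x)) (1 - p)%R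
         * (expm u x)%:E
     else 0))%E.

Definition odeltaJ (n : nat) (p : R) (u : 'rV[R]_n -> \bar R)
    (hg : 'rV[R]_n -> \bar R) : \bar R :=
  poweR (p%:E * deltaJ p u hg * ((fine (Jdiamond (expm u)))^-1)%:E)%E (p^-1)%R.

(* Gaussians gamma_phi(x) = exp(-|phi x|^2/2) = e^{-u_phi}, u_phi(x) = |phi x|^2/2;
   phi x is the vector with coordinates sum_j phi_ij x_j. *)
Definition ugauss (n : nat) (phi : 'M[R]_n) : 'rV[R]_n -> \bar R :=
  fun x => ((enorm (x *m phi^T)) ^+ 2 / 2)%:E.
Definition gauss (n : nat) (phi : 'M[R]_n) : 'rV[R]_n -> R := expm (ugauss phi).
Definition hgauss (n : nat) (phi : 'M[R]_n) : 'rV[R]_n -> \bar R :=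
  legendre (ugauss phi).

Definition c_n (n : nat) : R := powR (2 * pi) (n%:R / 2).

Definition solves_Sp (n : nat) (p : R) (u : 'rV[R]_n -> \bar R) (phi0 : 'M[R]_n) : Prop :=
  phi0 \in unitmx /\ (odeltaJ p u (hgauss phi0) <= 1)%E /\
  forall phi : 'M[R]_n, phi \in unitmx -> (odeltaJ p u (hgauss phi) <= 1)%E ->
    (Jf (gauss phi) * ((c_n n)^-1)%:E <= Jf (gauss phi0) * ((c_n n)^-1)%:E)%E.

End Defs.

From HB Require Import structures.
From mathcomp Require Import all_boot all_order all_algebra.
From mathcomp Require Import all_classical all_reals all_analysis.
From mathcomp Require Import ring lra.
Import Order.TTheory GRing.Theory Num.Theory.
Set Implicit Arguments. Unset Strict Implicit. Unset Printing Implicit Defensive.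
Local Open Scope ring_scope.

(* Suppose the constraint of Problem S_p is slack at the solution, i.e.
   overline delta J_p(f, gamma_phi0) = s < 1.  The support function of
   gamma_(t phi) is t^-2 times that of gamma_phi, so overline delta J_p is
   multiplied by t^-2 when phi is replaced by t phi; choosing t < 1 with
   t^2 >= s keeps t phi0 admissible.  But shrinking phi strictly enlarges the
   Gaussian: gamma_(t phi0) >= gamma_phi0 + c 1_[1,2]^n for some c > 0, so
   J(gamma_(t phi0)) > J(gamma_phi0) (the latter being finite), contradicting
   maximality. *)

(* The library's monotonicity and linearity lemmas for integrals require
   measurable integrands, which the iterated integrals [lint] are not known to
   be; for nonnegative integrands they follow directly from the definition as
   a supremum over simple functions. *)
Section UpperIntegral.
Context d (T : measurableType d) (R : realType) (mu : {measure set T -> \bar R}).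
Local Open Scope ereal_scope.

Lemma ereal_supD_le (A B : set (\bar R)) (M : \bar R) :
  (forall a, A a -> 0 <= a) -> (forall b, B b -> 0 <= b) ->
  (A !=set0)%classic -> (B !=set0)%classic ->
  (forall a b, A a -> B b -> a + b <= M) -> ereal_sup A + ereal_sup B <= M.
Proof.
move=> A0 B0 [a0 Aa0] [b0 Bb0] leM.
have supBy : forall a, A a -> a + ereal_sup B <= M.
  move=> a Aa; have := A0 a Aa; case: a Aa => [r| |] // Aa r0.
  - rewrite -leeBrDl //; apply: ge_ereal_sup => b Bb; rewrite leeBrDl //.
    exact: leM.
  - have := leM _ _ Aa Bb0; rewrite addye; last by have := B0 _ Bb0; case: b0 {Bb0}.
    by rewrite leye_eq => /eqP ->; rewrite leey.
have supB0 : 0 <= ereal_sup B by exact: le_trans (B0 _ Bb0) (ereal_sup_ubound Bb0).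
case: (ereal_sup B) supB0 supBy => [r| |] // r0 supBy.
- rewrite -leeBrDr //; apply: ge_ereal_sup => a Aa; rewrite leeBrDr //.
  exact: supBy.
- have := supBy _ Aa0; rewrite addey; last by have := A0 _ Aa0; case: a0 {Aa0}.
  by rewrite leye_eq => /eqP ->; rewrite leey.
Qed.

Lemma ge0_le_integralT (f g : T -> \bar R) : (forall x, 0 <= f x) ->
  (forall x, f x <= g x) -> \int[mu]_x f x <= \int[mu]_x g x.
Proof.
move=> f0 fg; have g0 x : 0 <= g x := le_trans (f0 x) (fg x).
rewrite (ge0_integralTE mu f0) (ge0_integralTE mu g0).
apply: ereal_sup_le => _ [h /= hf <-]; exists h => //= x.
exact: le_trans (hf x) (fg x).
Qed.

Lemma ge0_integralZlT (k : R) (f : T -> \bar R) : (0 < k)%R ->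
  (forall x, 0 <= f x) -> \int[mu]_x (k%:E * f x) = k%:E * \int[mu]_x f x.
Proof.
move=> k0 f0; have kf0 x : 0 <= k%:E * f x by rewrite mule_ge0 // lee_fin ltW.
rewrite (ge0_integralTE mu f0) (ge0_integralTE mu kf0) -ereal_sup_pZl //.
congr ereal_sup; apply/seteqP; split.
- move=> _ [h /= hf <-].
  have ki0 : (0 <= k^-1)%R by rewrite invr_ge0 ltW.
  eexists.
    exists (scale_nnsfun h ki0); last reflexivity.
    move=> x /=.
    rewrite -(lee_pmul2l (x := k%:E)) ?lte_fin // -EFinM mulrA mulfV ?gt_eqF //.
    by rewrite mul1r; exact: hf.
  by rewrite sintegralrM muleA -EFinM mulfV ?gt_eqF // mul1e.
- move=> _ [_ [h /= hf <-] <-].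
  exists (scale_nnsfun h (ltW k0)); last by rewrite sintegralrM.
  by move=> x /=; rewrite EFinM lee_pmul2l ?lte_fin //; exact: hf.
Qed.

Lemma ge0_le_integralDT (f g : T -> \bar R) : (forall x, 0 <= f x) ->
  (forall x, 0 <= g x) ->
  \int[mu]_x f x + \int[mu]_x g x <= \int[mu]_x (f x + g x).
Proof.
move=> f0 g0; have fg0 x : 0 <= f x + g x by rewrite adde_ge0.
rewrite (ge0_integralTE mu f0) (ge0_integralTE mu g0) (ge0_integralTE mu fg0).
apply: ereal_supD_le.
- by move=> _ [h _ <-]; exact: sintegral_ge0.
- by move=> _ [h _ <-]; exact: sintegral_ge0.
- by eexists; exists nnsfun0; last reflexivity; move=> x /=; exact: f0.
- by eexists; exists nnsfun0; last reflexivity; move=> x /=; exact: g0.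
move=> _ _ [h1 /= h1f <-] [h2 /= h2g <-].
apply: ereal_sup_ubound; exists (add_nnsfun h1 h2); last by rewrite -sintegralD.
by move=> x /=; rewrite EFinD leeD.
Qed.

End UpperIntegral.

Section IteratedIntegral.
Context {R : realType}.
Local Open Scope ereal_scope.

Lemma lint_ge0 n (F : 'rV[R]_n -> \bar R) : (forall x, 0 <= F x) -> 0 <= lint F.
Proof.
elim: n F => [|n IH] F F0 /=; first exact: F0.
by apply: integral_ge0 => t _; apply: IH => y; exact: F0.
Qed.

Lemma le_lint n (F G : 'rV[R]_n -> \bar R) : (forall x, 0 <= F x) ->
  (forall x, F x <= G x) -> lint F <= lint G.
Proof.
elim: n F G => [|n IH] F G F0 FG /=; first exact: FG.
apply: ge0_le_integralT => t; first by apply: lint_ge0 => y; exact: F0.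
by apply: IH => y; [exact: F0 | exact: FG].
Qed.

Lemma lint0 n : lint (fun _ : 'rV[R]_n => 0) = 0.
Proof.
elim: n => [|n IH] //=; under eq_fun do rewrite IH.
exact: integral0.
Qed.

Lemma lintZl n (k : R) (F : 'rV[R]_n -> \bar R) : (0 <= k)%R ->
  (forall x, 0 <= F x) -> lint (fun x => k%:E * F x) = k%:E * lint F.
Proof.
move=> k0 F0; have [->|kn0] := eqVneq k 0%R.
  by rewrite mul0e; under eq_fun do rewrite mul0e; exact: lint0.
have {k0 kn0}k0 : (0 < k)%R by rewrite lt0r kn0.
elim: n F F0 => [|n IH] F F0 //=.
under eq_fun do rewrite IH //.
by apply: ge0_integralZlT => // t; apply: lint_ge0.
Qed.

Lemma le_lintD n (F G : 'rV[R]_n -> \bar R) : (forall x, 0 <= F x) ->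
  (forall x, 0 <= G x) -> lint F + lint G <= lint (fun x => F x + G x).
Proof.
elim: n F G => [|n IH] F G F0 G0 //=.
apply: le_trans (ge0_le_integralDT _ _ _) _.
- by move=> t; apply: lint_ge0.
- by move=> t; apply: lint_ge0.
apply: ge0_le_integralT => t; last exact: IH.
by rewrite adde_ge0 //; apply: lint_ge0.
Qed.

Lemma row_mx_const0 n (t : R) (y : 'rV[R]_n) :
  row_mx (const_mx t : 'rV[R]_1) y 0%R ord0 = t.
Proof.
by rewrite (_ : ord0 = lshift n (ord0 : 'I_1)) ?row_mxEl ?mxE //; apply/val_inj.
Qed.

Lemma row_mx_const_lift n (t : R) (y : 'rV[R]_n) (i : 'I_n) :
  row_mx (const_mx t : 'rV[R]_1) y 0%R (lift ord0 i) = y 0%R i.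
Proof. by rewrite (_ : lift ord0 i = rshift 1 i) ?row_mxEr //; apply/val_inj. Qed.

Lemma lint_prod n (f : R -> R) (I : R) : measurable_fun setT f ->
  (forall s, (0 <= f s)%R) -> \int[lebesgue_measure]_s (f s)%:E = I%:E ->
  lint (fun x : 'rV[R]_n => (\prod_(i < n) f (x 0%R i))%:E) = (I ^+ n)%:E.
Proof.
move=> mf f0 If.
have I0 : (0 <= I)%R.
  by rewrite -lee_fin -If; apply: integral_ge0 => s _; rewrite lee_fin.
elim: n => [|n IH] /=; first by rewrite big_ord0.
under eq_fun => t.
  under eq_fun do rewrite big_ord_recl row_mx_const0 EFinM.
  under eq_fun do under eq_bigr do rewrite row_mx_const_lift.
  rewrite lintZl ?IH //; last by move=> y; rewrite lee_fin prodr_ge0.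
  over.
rewrite ge0_integralZr //; first by rewrite If -EFinM -exprS.
- exact/measurable_realfun.measurable_EFinP.
- by move=> s _; rewrite lee_fin.
- by rewrite lee_fin exprn_ge0.
Qed.

End IteratedIntegral.

Section QuadraticForm.
Context {R : realType}.

Lemma inner_ge0 n (x : 'rV[R]_n) : 0 <= inner x x.
Proof. by apply: sumr_ge0 => i _; rewrite -expr2 sqr_ge0. Qed.

Lemma innerZl n a (x y : 'rV[R]_n) : inner (a *: x) y = a * inner x y.
Proof. by rewrite /inner mulr_sumr; apply: eq_bigr => i _; rewrite mxE mulrA. Qed.

Lemma innerZr n a (x y : 'rV[R]_n) : inner x (a *: y) = a * inner x y.
Proof. by rewrite /inner mulr_sumr; apply: eq_bigr => i _; rewrite mxE mulrCA. Qed.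

Lemma inner0l n (y : 'rV[R]_n) : inner 0 y = 0.
Proof. by rewrite /inner big1 // => i _; rewrite mxE mul0r. Qed.

Definition qform n (phi : 'M[R]_n) (x : 'rV[R]_n) : R :=
  inner (x *m phi^T) (x *m phi^T).

Lemma qform_ge0 n (phi : 'M[R]_n) x : 0 <= qform phi x.
Proof. exact: inner_ge0. Qed.

Lemma qform0 n (phi : 'M[R]_n) : qform phi 0 = 0.
Proof. by rewrite /qform mul0mx inner0l. Qed.

Lemma qformZ n (phi : 'M[R]_n) a x : qform phi (a *: x) = a ^+ 2 * qform phi x.
Proof. by rewrite /qform -scalemxAl innerZl innerZr mulrA -expr2. Qed.

Lemma qform_scalemx n (phi : 'M[R]_n) a x : qform (a *: phi) x = a ^+ 2 * qform phi x.
Proof.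
rewrite /qform (_ : (a *: phi)^T = a *: phi^T); last by apply/matrixP => i j; rewrite !mxE.
by rewrite -scalemxAr innerZl innerZr mulrA -expr2.
Qed.

Lemma ler_sum_term (I : finType) (F : I -> R) i :
  (forall j, 0 <= F j) -> F i <= \sum_j F j.
Proof. by move=> F0; rewrite (bigD1 i) //= lerDl sumr_ge0. Qed.

Lemma inner_mulmx_le n (A : 'M[R]_n) (x : 'rV[R]_n) :
  inner (x *m A) (x *m A) <= n%:R * (\sum_i \sum_j `|A i j|) ^+ 2 * inner x x.
Proof.
set P := \sum_i \sum_j `|A i j|; set s := Num.sqrt (inner x x).
have s0 : 0 <= s by exact: sqrtr_ge0.
have P0 : 0 <= P by do 2!apply: sumr_ge0 => ? _.
have xs i : `|x 0 i| <= s.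
  rewrite -sqrtr_sqr ler_sqrt ?inner_ge0 // expr2.
  by apply: (ler_sum_term (F := fun j => x 0 j * x 0 j)) => j; rewrite -expr2 sqr_ge0.
have xAs j : `|(x *m A) 0 j| <= s * P.
  rewrite mxE; apply: le_trans (ler_norm_sum _ _ _) _.
  apply: (@le_trans _ _ (\sum_i s * `|A i j|)).
    by apply: ler_sum => i _; rewrite normrM ler_wpM2r.
  rewrite -mulr_sumr ler_wpM2l //; apply: ler_sum => i _.
  exact: (ler_sum_term (F := fun j' => `|A i j'|)).
apply: (@le_trans _ _ (\sum_(j < n) (s * P) ^+ 2)).
  apply: ler_sum => j _; set a := (x *m A) 0 j.
  rewrite -[a * a]ger0_norm; last by rewrite -expr2 sqr_ge0.
  by rewrite normrM expr2 ler_pM ?xAs.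
rewrite sumr_const card_ord exprMn sqr_sqrtr ?inner_ge0 //.
by rewrite -[leLHS]mulr_natl [inner x x * _]mulrC mulrA.
Qed.

Lemma qform_le n (phi : 'M[R]_n) x :
  qform phi x <= n%:R * (\sum_i \sum_j `|phi^T i j|) ^+ 2 * inner x x.
Proof. exact: inner_mulmx_le. Qed.

(* Applies [inner_mulmx_le] to [x = (x *m phi^T) *m (phi^T)^-1]. *)
Lemma qform_ge n (phi : 'M[R]_n) : phi \in unitmx ->
  exists2 lam, 0 < lam & forall x, lam * inner x x <= qform phi x.
Proof.
move=> phiU; set K := n%:R * (\sum_i \sum_j `|invmx phi^T i j|) ^+ 2.
have K0 : 0 <= K by rewrite mulr_ge0 // sqr_ge0.
exists (K + 1)^-1; first by rewrite invr_gt0 ltr_wpDl.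
move=> x; rewrite ler_pdivrMl ?ltr_wpDl // mulrDl mul1r.
apply: (@le_trans _ _ (K * qform phi x)); last by rewrite lerDl qform_ge0.
by have := inner_mulmx_le (invmx phi^T) (x *m phi^T); rewrite mulmxK ?unitmx_tr.
Qed.

End QuadraticForm.

Section Gaussian.
Context {R : realType}.

Lemma ugaussE n (phi : 'M[R]_n) x : ugauss phi x = (qform phi x / 2)%:E.
Proof. by rewrite /ugauss /enorm sqr_sqrtr // inner_ge0. Qed.

Lemma gaussE n (phi : 'M[R]_n) x : gauss phi x = expR (- (qform phi x / 2)).
Proof. by rewrite /gauss /expm ugaussE. Qed.

Lemma gauss_ge0 n (phi : 'M[R]_n) x : 0 <= gauss phi x.
Proof. by rewrite gaussE expR_ge0. Qed.

Lemma hgauss_ge0 n (phi : 'M[R]_n) y : (0 <= hgauss phi y)%E.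
Proof.
apply: ereal_sup_ubound; exists 0 => //.
by rewrite ugaussE qform0 inner0l mul0r subee.
Qed.

(* The substitution [x = t^2 z] in the supremum defining the Legendre transform. *)
Lemma hgauss_scalemx n (phi : 'M[R]_n) (t : R) y : 0 < t ->
  hgauss (t *: phi) y = ((t ^- 2)%:E * hgauss phi y)%E.
Proof.
move=> t0; rewrite /hgauss /legendre -ereal_sup_pZl ?invr_gt0 ?exprn_gt0 //.
congr ereal_sup; apply/seteqP; split.
- move=> _ [x _ <-]; exists ((inner (t ^+ 2 *: x) y)%:E - ugauss phi (t ^+ 2 *: x))%E.
    by exists (t ^+ 2 *: x).
  rewrite !ugaussE innerZl qformZ qform_scalemx -EFinB -EFinM; congr EFin.
  by field; rewrite gt_eqF.
- move=> _ [_ [z _ <-] <-]; exists (t ^- 2 *: z) => //.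
  rewrite !ugaussE innerZl qformZ qform_scalemx -EFinB -EFinM; congr EFin.
  by field; rewrite gt_eqF.
Qed.

End Gaussian.

Section GaussianMass.
Context {R : realType}.

Lemma JfE n (f : 'rV[R]_n -> R) : (forall x, 0 <= f x) ->
  Jf f = lint (fun x => (f x)%:E).
Proof.
move=> f0; rewrite /Jf /rint (_ : (fun x => (Num.max (- f x) 0)%:E) = fun=> 0%E).
  by under eq_fun do rewrite max_l //; rewrite lint0 sube0.
by apply/funext => x; rewrite max_r // oppr_le0.
Qed.

(* [gauss phi] is dominated by a multiple of a product of centred normal densities. *)
Lemma lint_gauss_lty n (phi : 'M[R]_n) : phi \in unitmx ->
  (lint (fun x => (gauss phi x)%:E) < +oo)%E.
Proof.
move=> phiU; have [lam lam0 qlo] := qform_ge phiU.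
set sg := Num.sqrt lam^-1.
have sg2 : sg ^+ 2 = lam^-1 by rewrite sqr_sqrtr // invr_ge0 ltW.
have sg0 : sg != 0 by rewrite sqrtr_eq0 -ltNge invr_gt0.
have pk0 : 0 < normal_peak sg by exact: normal_peak_gt0.
set pdf := fun x : 'rV[R]_n => \prod_(i < n) normal_pdf 0 sg (x 0 i).
have pdf0 x : 0 <= pdf x by apply: prodr_ge0 => i _; exact: normal_pdf_ge0.
apply: (@le_lt_trans _ _
  (lint (fun x => ((normal_peak sg ^+ n)^-1)%:E * (pdf x)%:E)%E)).
  apply: le_lint => x; first by rewrite lee_fin gauss_ge0.
  rewrite -EFinM lee_fin /pdf normal_pdfE // gaussE big_split /= prodr_const.
  rewrite card_ord mulrA mulVf ?expf_neq0 ?gt_eqF // mul1r /normal_fun -expR_sum.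
  rewrite ler_expR (_ : \sum_(i < n) _ = - (lam * inner x x / 2)).
    by rewrite lerN2 ler_pM2r // qlo.
  rewrite /inner mulr_sumr mulr_suml -sumrN; apply: eq_bigr => i _.
  by rewrite sg2 subr0 -mulr_natr; field; rewrite gt_eqF.
rewrite lintZl ?invr_ge0 ?exprn_ge0 ?ltW //.
rewrite /pdf (@lint_prod R n _ 1) ?expr1n ?mulr1 ?ltry //.
- exact: measurable_normal_pdf.
- by move=> s; exact: normal_pdf_ge0.
- exact: integral_normal_pdf.
Qed.

Definition cube_indic n (x : 'rV[R]_n) : R :=
  \prod_(i < n) \1_(`[1, 2]%classic : set R) (x 0 i).

Lemma cube_indic_ge0 n (x : 'rV[R]_n) : 0 <= cube_indic x.
Proof. by apply: prodr_ge0 => i _; rewrite indicE. Qed.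

Lemma cube_indic_le1 n (x : 'rV[R]_n) : cube_indic x <= 1.
Proof. by apply: Num.Theory.prodr_ile1 => i _; rewrite indicE ler0n lern1 leq_b1. Qed.

Lemma cube_indic_neq0 n (x : 'rV[R]_n) : cube_indic x != 0 ->
  forall i, 1 <= x 0 i <= 2.
Proof.
move/prodf_neq0 => x_neq0 i; move: (x_neq0 i isT).
by rewrite indicE pnatr_eq0 eqb0 negbK inE /= in_itv.
Qed.

Lemma lint_cube_indic n : lint (fun x : 'rV[R]_n => (cube_indic x)%:E) = 1%E.
Proof.
rewrite (@lint_prod R n _ 1) ?expr1n // integral_indic // setIT.
have := @lebesgue_measure_itv R `[1, 2]; rewrite /= lte_fin ltr1n => ->.
by rewrite -EFinB; congr EFin; lra.
Qed.

Lemma inner_cube n (x : 'rV[R]_n) : (forall i, 1 <= x 0 i <= 2) ->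
  n%:R <= inner x x <= 4 * n%:R.
Proof.
move=> x12; have -> : 4 * n%:R = \sum_(i < n) (4 : R).
  by rewrite sumr_const card_ord mulr_natr.
have -> : n%:R = \sum_(i < n) (1 : R) by rewrite sumr_const card_ord.
by apply/andP; split; apply: ler_sum => i _; have /andP[] := x12 i; nra.
Qed.

Lemma expR_gap (s lam q qM : R) : 0 <= s <= 1 -> 0 <= lam <= q -> q <= qM ->
  expR (- (q / 2)) + expR (- (s * qM / 2)) * (1 - expR (- ((1 - s) * lam / 2)))
    <= expR (- (s * q / 2)).
Proof.
move=> /andP[s0 s1] /andP[lam0 lamq] qqM.
have -> : expR (- (q / 2)) = expR (- (s * q / 2)) * expR (- ((1 - s) * q / 2)).
  by rewrite -expRD; congr expR; ring.
set A := expR (- (s * q / 2)); set B := expR (- ((1 - s) * q / 2)).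
have : expR (- (s * qM / 2)) * (1 - expR (- ((1 - s) * lam / 2))) <= A * (1 - B).
  apply: ler_pM; rewrite ?expR_ge0 ?subr_ge0 ?expR_le1 ?oppr_le0 ?divr_ge0 ?mulr_ge0 //.
  - by rewrite subr_ge0.
  - by rewrite ler_expR lerN2 ler_pM2r // ler_wpM2l.
  - by rewrite lerB // ler_expR lerN2 ler_pM2r // ler_wpM2l // subr_ge0.
by rewrite mulrBr mulr1; lra.
Qed.

Lemma gauss_scalemx_ge n (phi : 'M[R]_n) (t : R) : (0 < n)%N -> phi \in unitmx ->
  0 < t < 1 -> exists2 c, 0 < c &
    forall x, gauss phi x + c * cube_indic x <= gauss (t *: phi) x.
Proof.
move=> n0 phiU /andP[t0 t1]; have [lam lam0 qlo] := qform_ge phiU.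
have t21 : t ^+ 2 <= 1 by rewrite expr_le1 ?ltW.
set qM := n%:R * (\sum_i \sum_j `|phi^T i j|) ^+ 2 * (4 * n%:R).
set lo := lam * n%:R.
pose c := expR (- (t ^+ 2 * qM / 2)) * (1 - expR (- ((1 - t ^+ 2) * lo / 2))).
have c0 : 0 < c.
  rewrite mulr_gt0 ?expR_gt0 // subr_gt0 expR_lt1 oppr_lt0 divr_gt0 //.
  by rewrite !mulr_gt0 // ?ltr0n // subr_gt0 expr_lt1 // ltW.
exists c => // x; rewrite !gaussE qform_scalemx.
have [->|/cube_indic_neq0 xcube] := eqVneq (cube_indic x) 0.
  by rewrite mulr0 addr0 ler_expR lerN2 ler_pM2r // ler_piMl ?qform_ge0.
have /andP[xlo xhi] := inner_cube xcube.
have lo_q : lo <= qform phi x := le_trans (ler_wpM2l (ltW lam0) xlo) (qlo x).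
have q_qM : qform phi x <= qM.
  by apply: le_trans (qform_le phi x) (ler_wpM2l _ xhi); rewrite mulr_ge0 ?sqr_ge0.
apply: le_trans (expR_gap _ _ q_qM).
  by rewrite lerD2l; apply: ler_piMr (ltW c0) (cube_indic_le1 x).
- by rewrite sqr_ge0 t21.
- by rewrite lo_q andbT mulr_ge0 ?ler0n ?ltW.
Qed.

Lemma Jf_gauss_scalemx_gt n (phi : 'M[R]_n) (t : R) : (0 < n)%N -> phi \in unitmx ->
  0 < t < 1 -> (Jf (gauss phi) < Jf (gauss (t *: phi)))%E.
Proof.
move=> n0 phiU t01; have [c c0 gauss_ge] := gauss_scalemx_ge n0 phiU t01.
rewrite !JfE; try exact: gauss_ge0.
set J := lint _; have J0 : (0 <= J)%E by apply: lint_ge0 => x; rewrite lee_fin gauss_ge0.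
have Jfin : J \is a fin_num by rewrite ge0_fin_numE // lint_gauss_lty.
apply: (@lt_le_trans _ _ (J + c%:E)%E); first by rewrite lteDl.
rewrite /J -[c%:E]mule1 -(lint_cube_indic n) -lintZl ?(ltW c0) //; last first.
  by move=> x; rewrite lee_fin cube_indic_ge0.
have c_cube0 (x : 'rV[R]_n) : (0 <= c%:E * (cube_indic x)%:E)%E.
  by rewrite -EFinM lee_fin mulr_ge0 ?(ltW c0) ?cube_indic_ge0.
have gauss0 x : (0 <= (gauss phi x)%:E)%E by rewrite lee_fin gauss_ge0.
apply: le_trans (le_lintD gauss0 c_cube0) _.
apply: le_lint => x; first exact: adde_ge0.
by rewrite -EFinM -EFinD lee_fin gauss_ge.
Qed.

End GaussianMass.

Section FirstVariation.
Context {R : realType}.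
Local Open Scope ereal_scope.

Lemma epow_ge0 (a : \bar R) s : 0 <= epow a s.
Proof.
by case: a => [r| |] //=; repeat case: ifP => //; rewrite lee_fin powR_ge0.
Qed.

Lemma expm_ge0 n (u : 'rV[R]_n -> \bar R) x : (0 <= expm u x)%R.
Proof. by rewrite /expm; case: (u x) => //= r; exact: expR_ge0. Qed.

Lemma epowZl (k p : R) (a : \bar R) : (0 < k)%R -> (0 < p)%R -> 0 <= a ->
  epow (k%:E * a) p = (powR k p)%:E * epow a p.
Proof.
move=> k0 p0; have [p_lt0 p_eq0] : (p < 0)%R = false /\ (p == 0%R) = false.
  by rewrite ltNge ltW // gt_eqF.
case: a => [r| |] //= r0; rewrite ?p_lt0 ?p_eq0.
- rewrite mulf_eq0 (gt_eqF k0) /=; case: ifP => _; first by rewrite mule0.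
  by rewrite powRM // ?ltW // -lee_fin.
- by rewrite gt0_muley ?lte_fin //= p_lt0 p_eq0 gt0_muley // lte_fin powR_gt0.
Qed.

Lemma deltaJ_gauss_scalemx n (p : R) (u : 'rV[R]_n -> \bar R) (phi : 'M[R]_n) (t : R) :
  (0 < t)%R -> (0 < p)%R ->
  deltaJ p u (hgauss (t *: phi)) = (powR (t ^- 2) p)%:E * deltaJ p u (hgauss phi).
Proof.
move=> t0 p0; rewrite /deltaJ muleCA; congr (_ * _).
rewrite -lintZl ?powR_ge0 //; last first.
  by move=> x; case: ifP => // _; rewrite !mule_ge0 ?epow_ge0 // lee_fin expm_ge0.
congr lint; apply/funext => x; case: ifP => _; last by rewrite mule0.
rewrite hgauss_scalemx // epowZl ?hgauss_ge0 ?invr_gt0 ?exprn_gt0 //.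
by rewrite !muleA.
Qed.

(* For a finite negative base, [poweR] returns the junk value [1]; the
   hypothesis [x `^ r != 1] rules this case out. *)
Lemma poweRZl (k r : R) (x : \bar R) : (0 < k)%R -> (r != 0)%R -> poweR x r != 1 ->
  poweR (k%:E * x) r = (powR k r)%:E * poweR x r.
Proof.
move=> k0 r0; case: x => [a| |].
- have [a_lt0|a_ge0] := ltP a 0%R.
    have powRa : powR a r = 1%R by rewrite /powR lt_eqF // ln0 ?ltW // mulr0 expR0.
    by rewrite poweR_EFin powRa eqxx.
  by move=> _; rewrite poweRM ?lee_fin ?(ltW k0) // !poweR_EFin.
- by rewrite gt0_muley ?lte_fin // poweRyr // gt0_muley // lte_fin powR_gt0.
- by rewrite gt0_muleNy ?lte_fin // poweRNyr // mule0.
Qed.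

Lemma odeltaJ_gauss_scalemx n (p : R) (u : 'rV[R]_n -> \bar R) (phi : 'M[R]_n) (t : R) :
  (0 < t)%R -> (0 < p)%R -> odeltaJ p u (hgauss phi) != 1 ->
  odeltaJ p u (hgauss (t *: phi)) = (t ^- 2)%:E * odeltaJ p u (hgauss phi).
Proof.
move=> t0 p0 ne1; rewrite {1}/odeltaJ deltaJ_gauss_scalemx // muleCA -muleA.
rewrite (poweRZl _ _ ne1) ?powR_gt0 ?invr_gt0 ?exprn_gt0 ?invr_eq0 ?gt_eqF //.
by rewrite -powRrM mulfV ?gt_eqF // powRr1 // invr_ge0 exprn_ge0 ?ltW.
Qed.

Lemma odeltaJ_lt1_shrink n (p : R) (u : 'rV[R]_n -> \bar R) (phi : 'M[R]_n) :
  (0 < p)%R -> odeltaJ p u (hgauss phi) < 1 ->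
  exists2 t : R, (0 < t < 1)%R & odeltaJ p u (hgauss (t *: phi)) <= 1.
Proof.
move=> p0 lt1; have ne1 := lt_eqF lt1.
have s0 : 0 <= odeltaJ p u (hgauss phi) by exact: poweR_ge0.
have sfin : odeltaJ p u (hgauss phi) \is a fin_num.
  by rewrite ge0_fin_numE // (lt_trans lt1) ?ltry.
set s := fine (odeltaJ p u (hgauss phi)).
have sE : odeltaJ p u (hgauss phi) = s%:E by rewrite fineK.
move: s0 lt1; rewrite sE lee_fin lte_fin => s0 s1.
have m0 : (0 < (1 + s) / 2)%R by lra.
exists (Num.sqrt ((1 + s) / 2)).
  by rewrite sqrtr_gt0 m0 -[X in (_ < X)%R]sqrtr1 ltr_sqrt //; lra.
rewrite odeltaJ_gauss_scalemx ?sqrtr_gt0 ?ne1 // sE -EFinM lee_fin sqr_sqrtr ?(ltW m0) //.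
by rewrite mulrC ler_pdivrMr // mul1r; lra.
Qed.

End FirstVariation.

Theorem corollary3p4 (R : realType) (n : nat) (p : R) (u : 'rV[R]_n -> \bar R)
    (phi0 : 'M[R]_n) :
  (0 < n)%N -> 1 <= p -> classA0 u -> solves_Sp p u phi0 ->
  odeltaJ p u (hgauss phi0) = 1%E.
Proof.
move=> n0 p1 _ [phi0U [feas0 maxi]].
have p0 : 0 < p := lt_le_trans ltr01 p1.
apply/eqP; rewrite eq_le feas0 /= leNgt; apply/negP => lt1.
have [t t01 feast] := odeltaJ_lt1_shrink p0 lt1.
have tphi0U : t *: phi0 \in unitmx.
  by case/andP: t01 => t0 _; rewrite unitmxZ // unitfE gt_eqF.
have cn0 : 0 < (c_n R n)^-1 by rewrite invr_gt0 powR_gt0 // mulr_gt0 // pi_gt0.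
have := maxi _ tphi0U feast; rewrite lee_pmul2r ?lte_fin //.
by rewrite leNgt Jf_gauss_scalemx_gt.
Qed.
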